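(* Let $\kappa\ge1$, $n\ge1$ be integers and $0<\epsilon<1$. Let $\bar q\in\mathbb{R}^{2^\kappa}$ be given by $\bar q_0=0$ and $\bar q_i=\frac{1}{2^\kappa-1}$ for $1\le i\le2^\kappa-1$. Then $\lambda(n,\epsilon,\bar q)\le\lambda(n,\epsilon,q)$ for every $q\in\mathbb{R}^{2^\kappa}$ with $q_i\ge0$ for all $i$ and $\sum_{i=0}^{2^\kappa-1}q_i=1$.
   Context: $W=\mathbb{F}_2^\kappa$; $\nu(i)\in W$ is the binary expansion of $i\in\{0,\dots,2^\kappa-1\}$; vectors $q$ are indexed $q_0,\dots,q_{2^\kappa-1}$. For a subspace $S\subseteq W$, $\zeta(S,q)=\sum_{i:\nu(i)\in S}q_i$; $\Xi(W,\kappa-1)$ is the set of $(\kappa-1)$-dimensional subspaces of $W$. For real $q$ define $\lambda(n,\epsilon,q)=(2-\epsilon)^n2^{-\kappa}\Big(1+\sum_{S\in\Xi(W,\kappa-1)}\big(\tfrac{\epsilon}{2-\epsilon}\big)^{n(1-\zeta(S,q))}\Big)-1$ (for $q$ the column-distribution vector of a generator matrix, this is the $\chi^2$ divergence between $p_{MZ}$ and $p_Mp_Z$ for the coset code over a binary erasure channel with erasure probability $\epsilon$). *)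

From HB Require Import structures.
From mathcomp Require Import all_boot all_order all_algebra.
From mathcomp Require Import all_classical all_reals.
From mathcomp Require Import exp.
Set Implicit Arguments. Unset Strict Implicit. Unset Printing Implicit Defensive.
Import Order.TTheory GRing.Theory Num.Theory.
Local Open Scope ring_scope.

Definition W (kappa : nat) := 'rV['F_2]_kappa.

Definition nu (kappa : nat) (i : nat) : W kappa :=
  \row_(j < kappa) ((odd (i %/ 2 ^ j))%:R : 'F_2).

(* Subspaces of W are represented by their canonical square matrix <<A>>%MS
   (row space); distinct subspaces have distinct representatives. *)
Definition Xi (kappa d : nat) : {set 'M['F_2]_kappa} :=
  [set (<<A>>)%MS | A in [pred A : 'M['F_2]_kappa | \rank A == d]].

Definition in_sub (kappa : nat) (v : W kappa) (S : 'M['F_2]_kappa) : bool :=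
  (v <= S)%MS.

Definition zeta (R : realType) (kappa : nat) (S : 'M['F_2]_kappa)
  (q : 'I_(2 ^ kappa) -> R) : R :=
  \sum_(i < 2 ^ kappa | in_sub (nu kappa i) S) q i.

Definition lambda (R : realType) (kappa n : nat) (eps : R)
  (q : 'I_(2 ^ kappa) -> R) : R :=
  (2 - eps) ^+ n * (2 ^+ kappa)^-1 *
    (1 + \sum_(S in Xi kappa kappa.-1)
           powR (eps / (2 - eps)) (n%:R * (1 - zeta S q))) - 1.

Definition qbar (R : realType) (kappa : nat) : 'I_(2 ^ kappa) -> R :=
  fun i => if val i == 0%N then 0 else ((2 ^ kappa)%:R - 1)^-1.

Arguments lambda {R} kappa n eps q.
Arguments zeta {R} kappa S q.
Arguments qbar R kappa _ : clear implicits.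

From HB Require Import structures.
From mathcomp Require Import all_boot all_order all_algebra mxabelem.
From mathcomp Require Import all_classical all_reals sequences exp.
From mathcomp Require Import ring lra.
Import Order.TTheory GRing.Theory Num.Theory.
Local Open Scope ring_scope.
Set Implicit Arguments. Unset Strict Implicit. Unset Printing Implicit Defensive.

(* Over F_2 every hyperplane S of W is the kernel of a unique nonzero w, so
   there are 2^k - 1 of them and each contains 2^(k-1) - 1 nonzero vectors:
   zeta(S, qbar) = c := (2^(k-1) - 1) / (2^k - 1) for every S.  Dually every
   vector lies in at least 2^(k-1) - 1 hyperplanes, so for a probability
   vector q the zetas sum to at least 2^(k-1) - 1 = (2^k - 1) c.  The map
   z |-> r^(n(1 - z)), r = eps / (2 - eps) <= 1, is convex and nondecreasing,
   so its tangent at c bounds the sum defining lambda(q) below by the one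
   defining lambda(qbar). *)

Lemma F2_eq0_inj (a b : 'F_2) : (a == 0) = (b == 0) -> a = b.
Proof. by case: a b => [[|[|//]] ?] [[|[|//]] ?] // _; apply: val_inj. Qed.

Lemma card_nz_rowg (F : finFieldType) m n (A : 'M[F]_(m, n)) :
  #|[set v : 'rV_n | (v != 0) && (v <= A)%MS]| = (#|F| ^ \rank A).-1.
Proof.
rewrite -card_rowg (cardsD1 0 (rowg A)) mem_rowg sub0mx /=.
by apply: eq_card => v; rewrite !inE.
Qed.

Lemma rank_kermx_trV (F : fieldType) k (w : 'rV[F]_k) :
  w != 0 -> \rank (kermx w^T) = k.-1.
Proof. by move=> w0; rewrite mxrank_ker mxrank_tr rank_rV w0 subn1. Qed.

Lemma genmx_corank1 (F : fieldType) k (A : 'M[F]_k) :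
  (0 < k)%N -> \rank A = k.-1 ->
  exists2 w : 'rV_k, w != 0 & <<A>>%MS = <<kermx w^T>>%MS.
Proof.
move=> k0 rA; set w := nz_row (kermx A^T).
have w0 : w != 0.
  rewrite nz_row_eq0 -mxrank_eq0 mxrank_ker mxrank_tr rA.
  by rewrite subn_eq0 leqNgt ltn_predL k0.
have /sub_kermxP wA : (w <= kermx A^T)%MS := nz_row_sub _.
have sA : (A <= kermx w^T)%MS by rewrite sub_kermx -trmx_eq0 trmx_mul trmxK wA.
exists w => //; apply/eq_genmx/eqmxP.
by rewrite sA -(geq_leqif (mxrank_leqif_sup sA)) rA rank_kermx_trV ?leqnn.
Qed.

Definition hyperplane k (w : 'rV['F_2]_k) : 'M['F_2]_k := <<kermx w^T>>%MS.

Lemma in_sub_hyperplane k (x w : 'rV['F_2]_k) :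
  in_sub x (hyperplane w) = (x *m w^T == 0).
Proof. by rewrite /in_sub /hyperplane genmxE sub_kermx. Qed.

Lemma hyperplane_inj k : injective (@hyperplane k).
Proof.
move=> w1 w2 e; apply/rowP => j; apply: F2_eq0_inj.
have coord0 w : in_sub (delta_mx 0 j) (hyperplane w) = (w 0 j == 0).
  rewrite in_sub_hyperplane -rowE; apply/eqP/eqP => [/rowP/(_ 0)|wj0].
    by rewrite !mxE.
  by apply/rowP => i; rewrite !ord1 !mxE.
by rewrite -!coord0 e.
Qed.

Lemma Xi_corank1 k :
  (0 < k)%N -> Xi k k.-1 = @hyperplane k @: [set w : 'rV['F_2]_k | w != 0].
Proof.
move=> k0; apply/setP => S; apply/imsetP/imsetP => [[A] | [w]]; rewrite inE.
  move=> /eqP rA ->; have [w w0 ->] := genmx_corank1 k0 rA.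
  by exists w; rewrite ?inE.
by move=> w0 ->; exists (kermx w^T); rewrite // inE rank_kermx_trV.
Qed.

Lemma card_Xi_corank1 k : (0 < k)%N -> #|Xi k k.-1| = (2 ^ k).-1.
Proof.
move=> k0; rewrite Xi_corank1 // card_imset; last exact: hyperplane_inj.
have := card_nz_rowg (1%:M : 'M['F_2]_k); rewrite mxrank1 card_Fp // => <-.
by apply: eq_card => w; rewrite !inE submx1 andbT.
Qed.

Lemma card_Xi_mem k (x : 'rV['F_2]_k) : (0 < k)%N ->
  ((2 ^ k.-1).-1 <= #|[set S in Xi k k.-1 | in_sub x S]|)%N.
Proof.
move=> k0; rewrite Xi_corank1 //.
set B := [set w : 'rV['F_2]_k | (w != 0) && (w <= kermx x^T)%MS].
have sub_hyp : @hyperplane k @: B \subset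
                 [set S in @hyperplane k @: [set w | w != 0] | in_sub x S].
  apply/fintype.subsetP => _ /imsetP[w /[!inE] /andP[w0 wx] ->].
  by rewrite imset_f ?inE // in_sub_hyperplane -trmx_eq0 trmx_mul trmxK -sub_kermx.
apply: leq_trans (subset_leq_card sub_hyp).
rewrite card_imset; last exact: hyperplane_inj.
rewrite card_nz_rowg card_Fp // mxrank_ker mxrank_tr -!subn1.
by apply/leq_sub2r/leq_pexp2l => //; apply/leq_sub2l/rank_leq_row.
Qed.

Lemma bits_eq k i j : (i < 2 ^ k)%N -> (j < 2 ^ k)%N ->
  (forall l, (l < k)%N -> odd (i %/ 2 ^ l) = odd (j %/ 2 ^ l)) -> i = j.
Proof.
elim: k i j => [|k IH] i j; first by rewrite expn0 !ltnS !leqn0 => /eqP-> /eqP->.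
move=> ik jk bits_ij; rewrite -(odd_double_half i) -(odd_double_half j).
have := bits_ij 0%N (ltn0Sn _); rewrite expn0 !divn1 => ->.
congr (_ + _.*2); apply: IH; rewrite -?divn2 ?ltn_divLR // -?expnSr //.
by move=> l lk; have := bits_ij l.+1 lk; rewrite expnS !divnMA.
Qed.

Lemma nu_inj k : injective (fun i : 'I_(2 ^ k) => nu k i).
Proof.
move=> i j /= nu_ij; apply/val_inj/(bits_eq (ltn_ord i) (ltn_ord j)) => l lk.
have := congr1 (fun v : 'rV['F_2]_k => val (v 0 (Ordinal lk))) nu_ij.
by rewrite !mxE; case: odd; case: odd.
Qed.

Lemma card_nu k (P : pred 'rV['F_2]_k) :
  #|[set i : 'I_(2 ^ k) | P (nu k i)]| = #|[set x | P x]|.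
Proof.
have nu_bij : bijective (fun i : 'I_(2 ^ k) => nu k i).
  by apply: inj_card_bij (@nu_inj k) _; rewrite card_mx card_Fp // mul1n card_ord.
rewrite -(on_card_preimset (onW_bij _ nu_bij)).
by apply: eq_card => i; rewrite !inE.
Qed.

Lemma nu_eq0 k (i : 'I_(2 ^ k)) : (nu k i == 0) = (val i == 0%N).
Proof.
have nu0 : nu k (Ordinal (leq_ltn_trans (leq0n i) (ltn_ord i))) = 0.
  by apply/rowP => j; rewrite !mxE div0n.
by rewrite -nu0 (inj_eq (@nu_inj k)).
Qed.

Lemma zeta_qbar (R : realType) k S : S \in Xi k k.-1 ->
  zeta k S (qbar R k) = ((2 ^ k.-1).-1)%:R / ((2 ^ k)%:R - 1).
Proof.
case/imsetP => A /[!inE] /eqP rA ->.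
rewrite /zeta /qbar (bigID (fun i : 'I__ => val i == 0%N)) /= big1 ?add0r; last first.
  by move=> i /andP[_ ->].
rewrite (eq_bigr (fun=> ((2 ^ k)%:R - 1)^-1)); last by move=> i /andP[_ /negbTE ->].
rewrite sumr_const -[_ *+ #|_|]mulr_natl; congr (_%:R * _).
have := card_nz_rowg <<A>>%MS; rewrite mxrank_gen rA card_Fp // => <-.
by rewrite -card_nu; apply: eq_card => i; rewrite !inE nu_eq0 andbC.
Qed.

Lemma sum_zeta_ge (R : realType) k (q : 'I_(2 ^ k) -> R) : (0 < k)%N ->
  (forall i, 0 <= q i) -> \sum_i q i = 1 ->
  ((2 ^ k.-1).-1)%:R <= \sum_(S in Xi k k.-1) zeta k S q.
Proof.
move=> k0 q_ge0 q_sum1; rewrite /zeta (exchange_big_dep xpredT) //=.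
have -> : ((2 ^ k.-1).-1)%:R = \sum_i ((2 ^ k.-1).-1)%:R * q i :> R.
  by rewrite -mulr_sumr q_sum1 mulr1.
apply: ler_sum => i _.
rewrite sumr_const -[q i *+ _]mulr_natr mulrC ler_wpM2l // ler_nat.
by apply: leq_trans (card_Xi_mem (nu k i) k0) _; rewrite cardsE.
Qed.

Lemma sum_powR_ge (R : realType) (I : finType) (A : pred I) (r t c : R)
    (z : I -> R) :
  0 < r <= 1 -> 0 <= t -> #|A|%:R * c <= \sum_(i in A) z i ->
  #|A|%:R * powR r (t * (1 - c)) <= \sum_(i in A) powR r (t * (1 - z i)).
Proof.
case/andP=> r_gt0 r_le1 t_ge0 zc; set L := t * ln r.
have L_le0 : L <= 0 by rewrite /L mulr_ge0_le0 // ln_le0.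
have powE y : powR r (t * (1 - y)) = expR (t * (1 - y) * ln r).
  by rewrite /powR gt_eqF.
have tangent y : powR r (t * (1 - c)) * (1 + L * (c - y)) <= powR r (t * (1 - y)).
  rewrite !powE; have -> : t * (1 - y) * ln r = t * (1 - c) * ln r + L * (c - y).
    by rewrite /L; ring.
  by rewrite expRD ler_wpM2l ?expR_ge0 ?expR_ge1Dx.
apply: le_trans (ler_sum _ (fun i _ => tangent (z i))).
rewrite -mulr_sumr big_split /= sumr_const -mulr_sumr sumrB sumr_const.
rewrite -[c *+ _]mulr_natl mulrC ler_wpM2l ?powR_ge0 // lerDl.
by rewrite mulr_le0 // subr_le0.
Qed.

Theorem theorem7 (R : realType) (kappa n : nat) (eps : R)
  (hk : (1 <= kappa)%N) (hn : (1 <= n)%N) (he0 : 0 < eps) (he1 : eps < 1)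
  (q : 'I_(2 ^ kappa) -> R)
  (hq0 : forall i, 0 <= q i) (hq1 : \sum_(i < 2 ^ kappa) q i = 1) :
  lambda kappa n eps (qbar R kappa) <= lambda kappa n eps q.
Proof.
set c : R := ((2 ^ kappa.-1).-1)%:R / ((2 ^ kappa)%:R - 1).
have eps2 : 0 < 2 - eps by lra.
have r_bounds : 0 < eps / (2 - eps) <= 1.
  by rewrite divr_gt0 // ler_pdivrMr // mul1r; lra.
have card_Xi_c : #|Xi kappa kappa.-1|%:R * c = ((2 ^ kappa.-1).-1)%:R.
  have predn_E : ((2 ^ kappa).-1)%:R = (2 ^ kappa)%:R - 1 :> R.
    by rewrite -subn1 natrB // expn_gt0.
  rewrite card_Xi_corank1 // /c mulrCA predn_E divff ?mulr1 // -predn_E pnatr_eq0 -lt0n.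
  by rewrite ltn_predRL -[1%N](expn0 2) ltn_exp2l.
rewrite /lambda lerD2r; apply: ler_wpM2l.
  by rewrite mulr_ge0 ?invr_ge0 ?exprn_ge0 ?ltW.
rewrite lerD2l (eq_bigr (fun=> powR (eps / (2 - eps)) (n%:R * (1 - c)))); last first.
  by move=> S /zeta_qbar ->.
rewrite sumr_const -[_ *+ #|_|]mulr_natl.
apply: sum_powR_ge => //; rewrite card_Xi_c; exact: sum_zeta_ge.
Qed.
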